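(* Let $\mathcal{N}^+$ be a (metric or topological) rooted network on $X$ and let $Z\subseteq X$ with $|Z|\ge 2$. For every $x\in Z$ there is $y\in Z$ such that $\mathrm{MRCA}(\{x,y\})=\mathrm{MRCA}(Z)$.
   Context: Rooted network on $X$: connected directed acyclic graph without loops (at most two parallel edges allowed) with a root $r$ (indegree 0, outdegree 2), leaves bijectively labeled by $X$ (indegree 1, outdegree 0), tree nodes (indegree 1, outdegree 2) and hybrid nodes (indegree 2, outdegree 1). A node $v$ is above $u$ if there is a nonempty directed path from $v$ to $u$. For nonempty $Z\subseteq X$, let $D$ be the set of nodes lying on every directed path from $r$ to any $z\in Z$; $D$ is totally ordered by ''above'', and $\mathrm{MRCA}(Z)$ is the lowest element of $D$. *)

From mathcomp Require Import all_boot.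
Set Implicit Arguments. Unset Strict Implicit. Unset Printing Implicit Defensive.

Section Net.
Variables (V X : finType).

(* A directed multigraph on the finite node set V: [mult u v] is the number
   of parallel edges from u to v. *)
Definition edge (mult : V -> V -> nat) : rel V := fun u v => 0 < mult u v.
Definition indeg (mult : V -> V -> nat) (v : V) : nat := \sum_(u : V) mult u v.
Definition outdeg (mult : V -> V -> nat) (v : V) : nat := \sum_(u : V) mult v u.

Definition above (mult : V -> V -> nat) (v u : V) : Prop :=
  exists p : seq V, p != [::] /\ path (edge mult) v p /\ last v p = u.

Definition rooted_network (mult : V -> V -> nat) (r : V) (lab : X -> V) : Prop :=
  (forall u v, mult u v <= 2) /\ (forall v, mult v v = 0) /\
  (forall v, ~ above mult v v) /\
  (forall u v, connect (fun a b => edge mult a b || edge mult b a) u v) /\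
  indeg mult r = 0 /\ outdeg mult r = 2 /\
  injective lab /\ (forall x, indeg mult (lab x) = 1 /\ outdeg mult (lab x) = 0) /\
  (forall v, v = r \/ (exists x, v = lab x) \/
             (indeg mult v = 1 /\ outdeg mult v = 2) \/
             (indeg mult v = 2 /\ outdeg mult v = 1)).

(* w lies on every directed path from r to every z in Z
   (a path from r to z is the node sequence r :: p) *)
Definition in_D (mult : V -> V -> nat) (r : V) (lab : X -> V) (Z : {set X}) (w : V) : Prop :=
  forall z, z \in Z -> forall p : seq V, path (edge mult) r p -> last r p = lab z ->
    w \in r :: p.

Definition is_MRCA (mult : V -> V -> nat) (r : V) (lab : X -> V) (Z : {set X}) (m : V) : Prop :=
  in_D mult r lab Z m /\ (forall w, in_D mult r lab Z w -> w = m \/ above mult w m).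

End Net.

From mathcomp Require Import all_boot zify.
From Stdlib Require Import Classical.
Set Implicit Arguments. Unset Strict Implicit. Unset Printing Implicit Defensive.

(* Let m be a lowest element of D(Z); it differs from the leaf of x, as a leaf
   has no successor on a path to another leaf.  Among the nodes strictly below
   m lying on every path to x, take a highest one, c.  As c is below m it is not
   in D(Z), so some path from the root to a leaf y in Z avoids c.  An element w
   of D({x,y}) strictly below m lies in D({x}), hence strictly below c by the
   choice of c; then the avoiding path to y followed by the path from w to x
   avoids c too, contradicting c in D({x}). *)

Lemma ex_minimizer (T : Type) (P : T -> Prop) (f : T -> nat) :
  (exists v, P v) -> exists m, P m /\ forall w, P w -> f m <= f w.
Proof.
case=> v; move: {2}(f v) (erefl (f v)) => n; elim/ltn_ind: n v => n IH v hfv hv.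
case: (classic (exists w, P w /\ f w < n)) => [[w [hw hlt]] | hmin].
  exact: IH hlt w erefl hw.
exists v; split=> // w hw; rewrite hfv leqNgt; apply/negP => hlt.
by apply: hmin; exists w.
Qed.

Lemma rooted_network_indeg_gt0 (V X : finType) (mult : V -> V -> nat) r
    (lab : X -> V) :
  rooted_network mult r lab -> forall v, v != r -> 0 < indeg mult v.
Proof.
case=> [_ [_ [_ [_ [_ [_ [_ [hleaf hcls]]]]]]]] v hvr.
case: (hcls v) => [hv | [[z ->] | [[-> _] | [-> _]]]] //.
  by rewrite hv eqxx in hvr.
by rewrite (hleaf z).1.
Qed.

Section Dag.
Variables (V : finType) (mult : V -> V -> nat).
Local Notation e := (edge mult).
Local Notation above := (above mult).

Lemma above_connect u v : above u v -> connect e u v.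
Proof. by case=> p [_ [hp hl]]; apply/connectP; exists p. Qed.

Lemma connect_above u v : connect e u v -> u != v -> above u v.
Proof.
case/connectP=> p hp hl huv; exists p; split=> //.
by case: p hp hl => //= _ hl; rewrite hl eqxx in huv.
Qed.

Lemma above_connect_trans u v w : above u v -> connect e v w -> above u w.
Proof.
case=> p [hn [hp hl]] /connectP [q hq hlq]; exists (p ++ q); split.
  by case: p hn {hp hl}.
by rewrite cat_path last_cat hp hl hq.
Qed.

Lemma edge_above u v : e u v -> above u v.
Proof. by move=> huv; exists [:: v]; rewrite /= huv. Qed.

Lemma path_mem_connect x0 p u v : path e x0 p -> u \in x0 :: p -> v \in x0 :: p ->
  connect e u v || connect e v u.
Proof.
elim: p x0 => [|y p IH] x0 /=.
  by move=> _; rewrite !inE => /eqP -> /eqP ->; rewrite connect0.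
move=> /andP [hxy hp]; have hcx := path_connect (e := e) (x := x0) (p := y :: p).
rewrite /= hxy hp in hcx.
rewrite in_cons => /orP [/eqP -> | hu]; rewrite in_cons => /orP [/eqP -> | hv].
- by rewrite connect0.
- by rewrite hcx // in_cons hv orbT.
- by rewrite hcx ?orbT // in_cons hu orbT.
- exact: IH hp hu hv.
Qed.

Lemma path_mem_edge x0 p w : path e x0 p -> w \in x0 :: p -> w != last x0 p ->
  exists s, e w s.
Proof.
elim: p x0 => [|y p IH] x0 /=.
  by move=> _; rewrite inE => /eqP ->; rewrite eqxx.
move=> /andP [hxy hp]; rewrite in_cons => /orP [/eqP -> | hw] hl.
  by exists y.
exact: IH hp hw hl.
Qed.

Hypothesis acyclic : forall v, ~ above v v.

Definition ancestors v := [set u | (u != v) && connect e u v].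

Lemma above_card_ancestors u v : above u v -> #|ancestors u| < #|ancestors v|.
Proof.
move=> huv; apply: proper_card; apply/properP; split.
  apply/subsetP=> a; rewrite !inE => /andP [hau hcu].
  rewrite (connect_trans hcu (above_connect huv)) andbT.
  by apply/eqP=> hav; subst a; apply: (acyclic (above_connect_trans huv hcu)).
exists u; rewrite !inE ?eqxx // (above_connect huv) andbT.
by apply/eqP=> huv'; subst; exact: acyclic huv.
Qed.

Lemma ex_lowest (P : V -> Prop) :
  (exists v, P v) -> exists m, P m /\ forall c, above m c -> ~ P c.
Proof.
move=> /(ex_minimizer (fun w => #|V| - #|ancestors w|)) [m [hm hmin]].
exists m; split=> // c hmc hc.
have := above_card_ancestors hmc; have := hmin c hc.
have := max_card (ancestors c); lia.
Qed.

Lemma ex_highest (P : V -> Prop) :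
  (exists v, P v) -> exists c, P c /\ forall w, above w c -> ~ P w.
Proof.
move=> /(ex_minimizer (fun w => #|ancestors w|)) [c [hc hmin]].
exists c; split=> // w hwc hw.
by have := hmin w hw; rewrite leqNgt (above_card_ancestors hwc).
Qed.

Lemma connect_from_root r :
  (forall v, v != r -> 0 < indeg mult v) -> forall v, connect e r v.
Proof.
move=> hin; apply/forallP/contraT; rewrite negb_forall => /existsP hex.
have [v [hv hhigh]] := ex_highest hex.
have hvr : v != r by apply: contraNneq hv => ->; rewrite connect0.
have [u hu] : exists u, e u v.
  move: (hin v hvr); rewrite lt0n sum_nat_eq0 negb_forall => /existsP [u].
  by rewrite /= -lt0n; exists u.
case: (hhigh u (edge_above hu)).
by apply: contraNN hv => hru; exact: connect_trans hru (connect1 hu).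
Qed.

Section Mrca.
Variables (X : finType) (r : V) (lab : X -> V).
Hypothesis root_connect : forall v, connect e r v.
Local Notation in_D := (in_D mult r lab).

Lemma in_D_root (W : {set X}) : in_D W r.
Proof. by move=> z _ p _ _; exact: mem_head. Qed.

Lemma in_D_lab x : in_D [set x] (lab x).
Proof. by move=> z; rewrite inE => /eqP -> p _ <-; exact: mem_last. Qed.

Lemma in_D_subset (W W' : {set X}) w : W' \subset W -> in_D W w -> in_D W' w.
Proof. by move=> /subsetP hWW' hw z /hWW'; exact: hw. Qed.

Lemma in_D_connect (W : {set X}) x w : x \in W -> in_D W w -> connect e w (lab x).
Proof.
move=> xW hw; case/connectP: (root_connect (lab x)) => p hp /esym hl.
have hwp := hw x xW p hp hl; move: hp hl; case/splitPl: hwp => p1 p2 hl1.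
by rewrite cat_path last_cat hl1 => /andP [_ hp2] <-; apply/connectP; exists p2.
Qed.

Lemma in_D_comparable (W : {set X}) x u v : x \in W -> in_D W u -> in_D W v -> u != v ->
  above u v \/ above v u.
Proof.
move=> xW hu hv huv; case/connectP: (root_connect (lab x)) => p hp /esym hl.
case/orP: (path_mem_connect hp (hu x xW p hp hl) (hv x xW p hp hl)) => hc.
  by left; exact: connect_above hc huv.
by right; apply: connect_above hc _; rewrite eq_sym.
Qed.

Lemma lowest_is_MRCA (W : {set X}) x m : x \in W -> in_D W m ->
  (forall c, above m c -> ~ in_D W c) -> is_MRCA mult r lab W m.
Proof.
move=> xW hm hlow; split=> // w hw.
case: (eqVneq w m) => [-> | hwm]; [by left | right].
case: (in_D_comparable xW hw hm hwm) => // hmw.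
by case: (hlow w hmw hw).
Qed.

Lemma leaf_notin_D (W : {set X}) x y : outdeg mult (lab x) = 0 -> injective lab ->
  y \in W -> y != x -> ~ in_D W (lab x).
Proof.
move=> hout inj yW hyx hx; case/connectP: (root_connect (lab y)) => p hp /esym hl.
have [|s hs] := path_mem_edge hp (hx y yW p hp hl).
  by rewrite hl; apply: contra hyx => /eqP /inj ->.
move/eqP: hout; rewrite sum_nat_eq0 => /forallP /(_ s) /=.
by rewrite eqn0Ngt => /negP; apply.
Qed.

Lemma notin_D_avoiding_path (W : {set X}) c : ~ in_D W c ->
  exists2 y, y \in W & exists2 q, path e r q /\ last r q = lab y & c \notin r :: q.
Proof.
move=> hc; apply: NNPP => hno; apply: hc => z zW q hq hl.
apply/negPn/negP => hcq; apply: hno; exists z => //; by exists q.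
Qed.

(* Splice [q] up to [w] with a path from [w] to the leaf of [x]; the latter
   part avoids [c] because [c] is above [w]. *)
Lemma in_D1_above_mem x c w q : in_D [set x] c -> in_D [set x] w -> above c w ->
  path e r q -> w \in r :: q -> c \in r :: q.
Proof.
move=> hc hw hcw hq hwq.
case/connectP: (in_D_connect (set11 x) hw) => p2 hp2 /esym hl2.
case/splitPl: hwq hq => q1 q2 hl1; rewrite cat_path => /andP [hq1 _].
have : c \in r :: q1 ++ p2.
  by apply: (hc x (set11 x)); rewrite ?cat_path ?last_cat hl1 ?hq1.
rewrite -!cat_cons !mem_cat => /orP [-> // | hcp2].
case: (acyclic (above_connect_trans hcw _)).
by apply: (path_connect hp2); rewrite in_cons hcp2 orbT.
Qed.

Lemma lowest_pair_witness (Z : {set X}) x m : x \in Z -> in_D Z m ->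
  (forall c, above m c -> ~ in_D Z c) -> m != lab x ->
  exists2 y, y \in Z & forall w, above m w -> ~ in_D [set x; y] w.
Proof.
move=> xZ hm hlow hmx.
have hmlab : above m (lab x) := connect_above (in_D_connect xZ hm) hmx.
have [c [[hcx hmc] hhigh]] : exists c, (in_D [set x] c /\ above m c) /\
    forall w, above w c -> ~ (in_D [set x] w /\ above m w).
  by apply: ex_highest; exists (lab x); split=> //; exact: in_D_lab.
have [y yZ [q [hq hlq] hcq]] := notin_D_avoiding_path (hlow c hmc).
exists y => // w hmw hw.
have hwx : in_D [set x] w by apply: in_D_subset hw; rewrite sub1set set21.
have hwq : w \in r :: q := hw y (set22 x y) q hq hlq.
have hcw : c != w by apply: contraNneq hcq => ->.
case: (in_D_comparable (set11 x) hcx hwx hcw) => [hcw' | hwc].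
  by move: hcq; rewrite (in_D1_above_mem hcx hwx hcw' hq hwq).
exact: hhigh w hwc (conj hwx hmw).
Qed.

End Mrca.
End Dag.

Theorem mainTheorem5 (V X : finType) (mult : V -> V -> nat) (r : V) (lab : X -> V)
  (Z : {set X}) :
  rooted_network mult r lab -> 2 <= #|Z| ->
  forall x, x \in Z ->
    exists y, y \in Z /\
      exists m, is_MRCA mult r lab Z m /\ is_MRCA mult r lab [set x; y] m.
Proof.
move=> hnet hZ x xZ.
have [_ [_ [acyc [_ [_ [_ [inj [hleaf _]]]]]]]] := hnet.
have hreach := connect_from_root acyc (rooted_network_indeg_gt0 hnet).
have [m [hm hlow]] : exists m, in_D mult r lab Z m /\
    forall c, above mult m c -> ~ in_D mult r lab Z c.
  by apply: (ex_lowest acyc); exists r; exact: in_D_root.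
have hmx : m != lab x.
  have /card_gt0P [y] : 0 < #|Z :\ x| by move: hZ; rewrite (cardsD1 x) xZ.
  rewrite !inE => /andP [hyx yZ].
  by apply/eqP=> hmx; apply: (leaf_notin_D hreach (hleaf x).2 inj yZ hyx); rewrite -hmx.
have [y yZ hylow] := lowest_pair_witness acyc hreach xZ hm hlow hmx.
exists y; split=> //; exists m; split; first exact: (lowest_is_MRCA hreach xZ hm hlow).
apply: (lowest_is_MRCA hreach (set21 x y) _ hylow).
by apply: in_D_subset hm; rewrite subUset !sub1set xZ yZ.
Qed.
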